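(* Let $A$ be a real random variable with $\mathbb{E}[A]=0$ and $\mathbb{E}[A^2]=1$, and let $B$ be a real random variable independent of $A$ with continuously differentiable probability density function $f_B$. Let $\delta>0$ be such that $c=\sup_{s\in(-\delta,\delta)}\max\{|f_B(s)|,|f_B'(s)|\}$ is finite. Then for every $n\ge1$, $$\Big|\Pr\big[B\ge A/\sqrt n\big]-\Pr[B\ge0]\Big|\le\frac1n\Big(\frac{2}{\delta^2}+\frac{c}{\delta}+\frac c2\Big).$$ *)

From HB Require Import structures.
From mathcomp Require Import all_boot all_order all_algebra.
From mathcomp Require Import all_classical all_reals all_analysis.
Set Implicit Arguments. Unset Strict Implicit. Unset Printing Implicit Defensive.
Import Order.TTheory GRing.Theory Num.Theory.
Import numFieldNormedType.Exports.
Local Open Scope classical_set_scope.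
Local Open Scope ring_scope.

Definition indep_RV d (T : measurableType d) (R : realType) (P : probability T R)
  (X Y : T -> R) : Prop :=
  forall S U : set R, measurable S -> measurable U ->
    P (X @^-1` S `&` Y @^-1` U) = (P (X @^-1` S) * P (Y @^-1` U))%E.

Definition is_pdf d (T : measurableType d) (R : realType) (P : probability T R)
  (X : T -> R) (f : R -> R) : Prop :=
  (forall x, 0 <= f x) /\
  forall S : set R, measurable S ->
    P (X @^-1` S) = (\int[lebesgue_measure]_(x in S) (f x)%:E)%E.

Definition C1 (R : realType) (f : R -> R) : Prop :=
  (forall x : R, derivable f x 1) /\ continuous (derive1 f).

Definition local_C1_vals (R : realType) (f : R -> R) (delta : R) : set R :=
  [set r | exists s : R, - delta < s < delta /\
      r = Num.max `|f s| `|derive1 f s| ].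

From HB Require Import structures.
From mathcomp Require Import all_boot all_order all_algebra.
From mathcomp Require Import all_classical all_reals all_analysis.
From mathcomp Require Import ring lra measurable_realfun ftc.
Set Implicit Arguments. Unset Strict Implicit. Unset Printing Implicit Defensive.
Import Order.TTheory GRing.Theory Num.Theory.
Import numFieldNormedType.Exports.
Local Open Scope classical_set_scope.
Local Open Scope ring_scope.

(* Conditioning on [A] and using independence, P[A/sqrt n <= B] is E[1 - Phi(A/sqrt n)],
   where Phi is the distribution function of B, with Phi' = f_B and Phi'' = f_B'.
   Taylor's theorem gives |Phi t - Phi 0 - f_B(0) t| <= c t^2/2 for |t| < delta, and
   the crude bound |Phi t - Phi 0| + |f_B(0) t| <= (2/delta^2 + c/delta) t^2 for
   |t| >= delta, since 0 <= Phi <= 1 and |f_B(0)| <= c. Taking expectations, the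
   linear term vanishes because E[A] = 0 and the quadratic bound, with
   K = 2/delta^2 + c/delta + c/2, contributes K E[A^2]/n = K/n. *)

Section mean_value.
Context {R : realType}.
Implicit Types (F f df : R -> R) (c d s t : R).

Lemma derivable_continuous f : (forall x, derivable f x (1 : R)) -> continuous f.
Proof.
by move=> df x; apply: differentiable_continuous; rewrite -derivable1_diffP.
Qed.

Lemma MVT_origin f df t : (forall x, is_derive x (1 : R) f (df x)) ->
  exists2 x, `|x| <= `|t| /\ 0 <= x * t & f t - f 0 = df x * t.
Proof.
move=> fdf; have cf : continuous f.
  by apply: derivable_continuous => x; exact: ex_derive.
have [t0|t0] := leP 0 t.
  have [x + ->] := MVT_segment t0 (fun x _ => fdf x) (continuous_subspaceT cf).
  rewrite in_itv /= subr0 => /andP[x0 xt]; exists x => //.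
  by rewrite !ger0_norm ?mulr_ge0 //; exact: le_trans xt.
have [x + E] := MVT_segment (ltW t0) (fun x _ => fdf x) (continuous_subspaceT cf).
rewrite in_itv /= => /andP[tx x0]; exists x.
  by rewrite !ler0_norm ?lerN2 ?mulr_le0 // ltW.
by rewrite -opprB E sub0r mulrN opprK.
Qed.

Lemma derive1_bounded_lipschitz0 f c d s : (forall x, derivable f x (1 : R)) ->
  (forall x, `|x| < d -> `|derive1 f x| <= c) -> `|s| < d ->
  `|f s - f 0| <= c * `|s|.
Proof.
move=> df bf' sd; have fdf x : is_derive x (1 : R) f (derive1 f x).
  by rewrite derive1E; exact/derivableP.
have [x [xs _] ->] := MVT_origin s fdf.
rewrite normrM ler_wpM2r // bf' //; exact: le_lt_trans sd.
Qed.

Lemma taylor2_near0 F f c d t : (forall x, is_derive x (1 : R) F (f x)) ->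
  (forall x, derivable f x (1 : R)) -> (forall x, `|x| < d -> `|derive1 f x| <= c) ->
  `|t| < d -> `|F t - F 0 - f 0 * t| <= c / 2 * t ^+ 2.
Proof.
move=> dF df bf' td.
(* Mean value theorem for [s |-> F s - f 0 * s +- c/2 * s^2], whose derivative
   [f x - f 0 +- c x] has the sign of [+- x] because [|f x - f 0| <= c |x|]. *)
have mvt e : exists2 x, `|(f x - f 0) * t| <= c * (x * t) &
    F t - F 0 - f 0 * t + e * (c / 2) * t ^+ 2 = (f x - f 0) * t + e * c * (x * t).
  have dk x : is_derive x (1 : R) (fun s => F s - f 0 * s + e * (c / 2) * s ^+ 2)
      (f x - f 0 + e * c * x).
    by apply: is_derive_eq; rewrite /GRing.scale /=; field.
  have [x [xt xt0] E] := MVT_origin t dk.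
  exists x; last by apply: eq_trans (eq_trans E _); ring.
  rewrite normrM -(ger0_norm xt0) normrM mulrA ler_wpM2r //.
  exact: derive1_bounded_lipschitz0 (le_lt_trans xt td).
have [x1 b1 e1] := mvt 1; have [x2 b2 e2] := mvt (-1).
move: b1 b2 => /ler_normlP[b1 b1'] /ler_normlP[b2 b2'].
apply/ler_normlP; split; lra.
Qed.

Lemma taylor2_bounded F f c d t : 0 < d -> (forall x, 0 <= F x <= 1) ->
  (forall x, is_derive x (1 : R) F (f x)) -> (forall x, derivable f x (1 : R)) ->
  (forall x, `|x| < d -> `|derive1 f x| <= c) -> `|f 0| <= c ->
  `|F t - F 0 - f 0 * t| <= (2 / d ^+ 2 + c / d + c / 2) * t ^+ 2.
Proof.
move=> d0 F01 dF df bf' f0c.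
have c0 : 0 <= c := le_trans (normr_ge0 _) f0c.
have t2 : 0 <= t ^+ 2 := sqr_ge0 t.
have K1 : 0 <= 2 / d ^+ 2 * t ^+ 2 by rewrite mulr_ge0 ?divr_ge0 ?sqr_ge0.
have K2 : 0 <= c / d * t ^+ 2 by rewrite mulr_ge0 ?divr_ge0 // ltW.
have K3 : 0 <= c / 2 * t ^+ 2 by rewrite mulr_ge0 ?divr_ge0.
rewrite 2!mulrDl; have [td|dt] := ltP `|t| d.
  by have := taylor2_near0 dF df bf' td; lra.
have F1 : `|F t - F 0| <= 1.
  have /andP[? ?] := F01 t; have /andP[? ?] := F01 0.
  by apply/ler_normlP; split; lra.
have dt2 : 1 <= 2 / d ^+ 2 * t ^+ 2.
  rewrite mulrAC ler_pdivlMr ?exprn_gt0 // mul1r.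
  suff : d ^+ 2 <= t ^+ 2 by lra.
  by rewrite -(real_normK (num_real t)) lerXn2r // nnegrE ltW.
have tdt : c * `|t| <= c / d * t ^+ 2.
  rewrite -mulrA ler_wpM2l // mulrC ler_pdivlMr // -(real_normK (num_real t)).
  by rewrite expr2 ler_wpM2l.
have ft : `|f 0 * t| <= c * `|t| by rewrite normrM ler_wpM2r.
have := ler_normB (F t - F 0) (f 0 * t); lra.
Qed.

End mean_value.

Definition density_cdf (R : realType) (f : R -> R) (x : R) : R :=
  \int[lebesgue_measure]_(t in `]-oo, x]) f t.

Section density_cdf.
Context d (T : measurableType d) (R : realType) (P : probability T R).
Variables (X : {RV P >-> R}) (f : R -> R).
Hypotheses (Xf : is_pdf P X f) (cf : continuous f).

Let mf : measurable_fun setT f := continuous_measurable_fun cf.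

Let preimage_ray x : [set w | X w <= x] = X @^-1` `]-oo, x].
Proof. by apply/seteqP; split => w /=; rewrite in_itv. Qed.

Lemma probability_le_density_cdf x : P [set w | X w <= x] = (density_cdf f x)%:E.
Proof.
rewrite /density_cdf /Rintegral fineK -Xf.2 ?preimage_ray //.
by rewrite fin_num_measure //; exact: measurable_funPTI.
Qed.

Lemma density_cdf_ge0_le1 x : 0 <= density_cdf f x <= 1.
Proof.
rewrite -!lee_fin -probability_le_density_cdf preimage_ray.
by rewrite measure_ge0 probability_le1 //; exact: measurable_funPTI.
Qed.

Lemma probability_ge_density_cdf x : P [set w | x <= X w] = (1 - density_cdf f x)%:E.
Proof.
have -> : [set w | x <= X w] = ~` (X @^-1` `]-oo, x[).
  by apply/seteqP; split => w /=; rewrite in_itv /= leNgt => /negP.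
rewrite probability_setC; last exact: measurable_funPTI.
rewrite Xf.2 // integral_itv_bndo_bndc; last exact/measurable_EFinP/measurable_funTS.
by rewrite -Xf.2 // -preimage_ray probability_le_density_cdf EFinB.
Qed.

Lemma is_derive_density_cdf x : is_derive x (1 : R) (density_cdf f) (f x).
Proof.
have intf u : lebesgue_measure.-integrable `]-oo, u] (EFin \o f).
  apply/integrableP; split; first exact/measurable_EFinP/measurable_funTS.
  under eq_integral do rewrite /= ger0_norm ?Xf.1 //.
  rewrite -Xf.2 // (le_lt_trans (probability_le1 P _)) ?ltry //.
  exact: measurable_funPTI.
have x1 : x < x + 1 by rewrite ltrDl.
have [df <-] := continuous_FTC1 x1 (intf _) (ltNyr x) (@cf x).
by rewrite derive1E; exact: derivableP.
Qed.

Lemma continuous_density_cdf : continuous (density_cdf f).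
Proof.
by apply: derivable_continuous => x; apply: ex_derive; exact: is_derive_density_cdf.
Qed.

End density_cdf.

Section independent_pair.
Context d (T : measurableType d) (R : realType) (P : probability T R).
Variables (X Y : {RV P >-> R}).
Hypothesis XY : indep_RV P X Y.

Let XY_pair (w : T) : R * R := (X w, Y w).

Let measurable_XY_pair : measurable_fun setT XY_pair.
Proof. exact: measurable_fun_pair. Qed.

HB.instance Definition _ := isMeasurableFun.Build _ _ _ _ XY_pair measurable_XY_pair.

Lemma indep_RV_pair_preimage (E : set (R * R)) : measurable E ->
  P [set w | E (X w, Y w)] = (\int[distribution P X]_x P [set w | E (x, Y w)])%E.
Proof.
move=> mE; rewrite -[LHS]/(distribution P (XY_pair : {mfun T >-> (R * R)%type}) E).
rewrite -(product_measure_unique (m1 := distribution P X) (m2 := distribution P Y)) //.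
apply: eq_integral => x _; congr (P _).
by apply/seteqP; split => w; rewrite /xsection /preimage /= in_setE.
Qed.

End independent_pair.

Lemma indep_RV_density_probability_le d (T : measurableType d) (R : realType)
    (P : probability T R) (X Y : {RV P >-> R}) (f : R -> R) (e : R) :
  indep_RV P X Y -> is_pdf P Y f -> continuous f ->
  P [set w | X w * e <= Y w] = (\int[P]_w (1 - density_cdf f (X w * e))%:E)%E.
Proof.
move=> XY Yf cf; have mE : measurable [set p : R * R | p.1 * e <= p.2].
  rewrite -[X in measurable X]setTI; apply: measurable_fun_le => //.
  exact: measurable_funM.
rewrite (indep_RV_pair_preimage XY mE) /=.
under eq_integral do rewrite (probability_ge_density_cdf Yf cf).
rewrite ge0_integral_distribution //.
- apply/measurable_EFinP; apply: measurable_funB => //.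
  apply: measurableT_comp; last exact: measurable_funM.
  exact: continuous_measurable_fun (continuous_density_cdf Yf cf).
- by move=> x; rewrite lee_fin subr_ge0; case/andP: (density_cdf_ge0_le1 Yf (x * e)).
Qed.

Section second_order_expectation.
Context d (T : measurableType d) (R : realType) (P : probability T R).
Variable X : {RV P >-> R}.
Hypotheses (EX : ('E_P[X] = 0)%E) (EX2 : ('E_P[fun w => (X w ^+ 2)%R] = 1)%E).

Let intX : (\int[P]_w (X w)%:E = 0)%E.
Proof. by move: EX; rewrite unlock. Qed.

Let intX2 : (\int[P]_w (X w ^+ 2)%:E = 1)%E.
Proof. by move: EX2; rewrite unlock. Qed.

Let integrable_X2 : P.-integrable setT (fun w => (X w ^+ 2)%:E).
Proof.
apply/integrableP; split; first exact/measurable_EFinP/measurable_funX.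
by under eq_integral do rewrite abse_EFin ger0_norm ?sqr_ge0 //; rewrite intX2 ltry.
Qed.

(* [|x| <= 1 + x^2] makes [X] integrable as soon as [X^2] is. *)
Let integrable_X : P.-integrable setT (EFin \o X).
Proof.
have := integrableD measurableT
  (finite_measure_integrable_cst P 1 measurableT) integrable_X2.
apply: le_integrable => //; first exact/measurable_EFinP.
move=> w _; rewrite /= lee_fin [X in _ <= X]ger0_norm ?addr_ge0 ?sqr_ge0 //.
rewrite -(real_normK (num_real (X w))); have := normr_ge0 (X w); nra.
Qed.

Lemma expectation_taylor2_bound (G : R -> R) (k K M e : R) :
  measurable_fun setT G -> (forall t, `|G t| <= M) ->
  (forall t, `|G t - G 0 - k * t| <= K * t ^+ 2) ->
  (`|\int[P]_w (G (X w * e))%:E - (G 0)%:E| <= (K * e ^+ 2)%:E)%E.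
Proof.
move=> mG GM Gk.
have K0 : 0 <= K by rewrite -[K]mulr1 -(expr1n _ 2) (le_trans _ (Gk 1)).
have mGX : measurable_fun setT (fun w => G (X w * e)).
  by apply: measurableT_comp => //; exact: measurable_funM.
have iGX : P.-integrable setT (EFin \o (fun w => G (X w * e))).
  apply: le_integrable (finite_measure_integrable_cst P M measurableT) => //.
    exact/measurable_EFinP.
  by move=> w _; rewrite /= lee_fin; exact: le_trans (GM _) (ler_norm M).
have iG0 := finite_measure_integrable_cst P (G 0) measurableT.
have iGXG0 : P.-integrable setT (EFin \o (fun w => G (X w * e) - G 0)).
  apply: eq_integrable measurableT _ _ _ (integrableB measurableT iGX iG0).
  by move=> w _; rewrite /= EFinB.
have ikX : P.-integrable setT (EFin \o (fun w => k * e * X w)).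
  apply: eq_integrable measurableT _ _ _ (integrableZl measurableT (k * e) integrable_X).
  by move=> w _; rewrite /= EFinM.
set h := fun w => G (X w * e) - G 0 - k * e * X w.
have -> : (\int[P]_w (G (X w * e))%:E - (G 0)%:E = \int[P]_w (h w)%:E)%E.
  rewrite [in RHS](eq_integral (fun w => (G (X w * e) - G 0)%:E - (k * e * X w)%:E)%E);
    last by move=> w _; rewrite /h EFinB.
  rewrite integralB_EFin // integralB_EFin //.
  under [X in (_ = _ - X)%E]eq_integral do rewrite EFinM.
  by rewrite integralZl // intX mule0 sube0 integral_cst //= probability_setT mule1.
have mh : measurable_fun setT (fun w => (h w)%:E).
  apply/measurable_EFinP/measurable_funB; first exact: measurable_funB.
  exact: measurable_funM.
have K0e : 0 <= K * e ^+ 2 by rewrite mulr_ge0 ?sqr_ge0.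
apply: le_trans (le_abse_integral P measurableT mh) _.
rewrite -[X in (_ <= X)%E]mule1 -intX2 -ge0_integralZl_EFin //; last 2 first.
- by move=> w _; rewrite lee_fin sqr_ge0.
- exact/measurable_EFinP/measurable_funX.
apply: ge0_le_integral => //; first exact: measurableT_comp.
  exact/measurable_EFinP/measurable_funM/measurable_funX.
move=> w _; rewrite abse_EFin -EFinM lee_fin /h -mulrA (mulrC e).
by apply: le_trans (Gk _) _; rewrite exprMn (mulrC (X w ^+ 2)) mulrA.
Qed.

End second_order_expectation.

Lemma local_C1_vals_le_sup (R : realType) (f : R -> R) (delta s : R) :
  has_ubound (local_C1_vals f delta) -> `|s| < delta ->
  `|f s| <= sup (local_C1_vals f delta) /\
  `|derive1 f s| <= sup (local_C1_vals f delta).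
Proof.
move=> ub sd; have fs : local_C1_vals f delta (Num.max `|f s| `|derive1 f s|).
  by exists s; split => //; rewrite -ltr_norml.
have := sup_upper_bound (conj (ex_intro _ _ fs) ub) fs.
by rewrite ge_max => /andP.
Qed.

Theorem lemma5 (d : measure_display) (T : measurableType d) (R : realType)
  (P : probability T R) (A B : {RV P >-> R}) (fB : R -> R) (delta : R)
  (hEA : ('E_P[A] = 0)%E)
  (hEA2 : ('E_P[(fun w => (A w ^+ 2)%R)] = 1)%E)
  (hind : indep_RV P A B)
  (hpdf : is_pdf P B fB)
  (hC1 : C1 fB)
  (hdelta : 0 < delta)
  (hfin : has_ubound (local_C1_vals fB delta)) :
  let c := sup (local_C1_vals fB delta) in
  forall n : nat, (0 < n)%N ->
    (`| P [set w | (A w / Num.sqrt (n%:R) <= B w)%R] - P [set w | (0 <= B w)%R] |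
      <= ((n%:R)^-1 * (2 / delta ^+ 2 + c / delta + c / 2))%:E)%E.
Proof.
move=> c n n0; set K := 2 / delta ^+ 2 + c / delta + c / 2.
have [dfB _] := hC1; have cfB := derivable_continuous dfB.
have bound s := local_C1_vals_le_sup (s := s) hfin.
rewrite (probability_ge_density_cdf hpdf cfB).
rewrite (indep_RV_density_probability_le _ hind hpdf cfB).
have -> : n%:R^-1 * K = K * (Num.sqrt n%:R)^-1 ^+ 2.
  by rewrite exprVn sqr_sqrtr ?ler0n // mulrC.
apply: (expectation_taylor2_bound hEA hEA2 (G := fun t => 1 - density_cdf fB t)
  (k := - fB 0) (M := 1)).
- apply: measurable_funB => //.
  exact: continuous_measurable_fun (continuous_density_cdf hpdf cfB).
- move=> t; have /andP[? ?] := density_cdf_ge0_le1 hpdf t.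
  by apply/ler_normlP; split; lra.
move=> t; rewrite mulNr opprK -normrN.
have -> : - (1 - density_cdf fB t - (1 - density_cdf fB 0) + fB 0 * t) =
    density_cdf fB t - density_cdf fB 0 - fB 0 * t by ring.
apply: taylor2_bounded => //.
- exact: density_cdf_ge0_le1 hpdf.
- exact: is_derive_density_cdf hpdf cfB.
- by move=> x /bound [].
- by case: (bound 0); rewrite ?normr0.
Qed.
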